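(* For every $n\ge2$, the inverse NLFT map $\mathtt S_n\to\mathbb C^n$, $(\mathbf a,\mathbf b)\mapsto\boldsymbol\gamma$, is not uniformly continuous when $\mathtt S_n\subseteq\mathbb C^n\times\mathbb C^n$ and $\mathbb C^n$ carry the Euclidean metric. Explicitly, for $k\ge2$ the pairs $\mathbf a^{(k)}=(\frac1k,0,\dots,0,\sqrt{\frac12-\frac1{k^2}})$, $\mathbf b^{(k)}=(\sqrt{\frac12-\frac1{k^2}},0,\dots,0,-\frac1k)$ lie in $\mathtt S_n$, satisfy $\|\mathbf a^{(k+1)}-\mathbf a^{(k)}\|_2^2+\|\mathbf b^{(k+1)}-\mathbf b^{(k)}\|_2^2\le 10/k^4$, while their inverse NLFTs satisfy $\|\boldsymbol\gamma^{(k+1)}-\boldsymbol\gamma^{(k)}\|_2\ge1/\sqrt2$.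
   Context: For $(\mathbf a,\mathbf b)\in\mathbb C^n\times\mathbb C^n$ let $a(z)=\sum_{k=0}^{n-1}a_kz^{-k}$, $b(z)=\sum_{k=0}^{n-1}b_kz^k$, and $a^*(z):=\overline{a(1/\overline z)}$ (similarly $b^*$). $\mathtt S_n$ is the set of $(\mathbf a,\mathbf b)$ with $a_0$ real and positive and $aa^*+bb^*=1$. The NLFT of $\boldsymbol\gamma$ supported in $\{0,\dots,n-1\}$ is $\prod_{k=0}^{n-1}\frac{1}{\sqrt{1+|\gamma_k|^2}}\begin{pmatrix}1&\gamma_kz^k\\-\overline{\gamma_k}z^{-k}&1\end{pmatrix}=\begin{pmatrix}a&b\\-b^*&a^*\end{pmatrix}$ (ordered by increasing $k$); it is a bijection from such sequences onto $\mathtt S_n$, and its inverse is the inverse NLFT. *)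

From HB Require Import structures.
From mathcomp Require Import all_boot all_order all_algebra.
From mathcomp Require Import reals.
From mathcomp Require Export complex.
Set Implicit Arguments. Unset Strict Implicit. Unset Printing Implicit Defensive.
Import Order.TTheory GRing.Theory Num.Theory.
Local Open Scope ring_scope.
Local Open Scope complex_scope.

Section NLFT.
Variable C : numClosedFieldType.
Variable n : nat.

Definition la (a : 'I_n -> C) (z : C) : C := \sum_(k < n) a k * z ^- k.
Definition lb (b : 'I_n -> C) (z : C) : C := \sum_(k < n) b k * z ^+ k.
Definition lstar (f : C -> C) (z : C) : C := (f ((z^*)^-1))^*.

Definition mx2 (p q r s : C) : 'M[C]_2 :=
  \matrix_(i < 2, j < 2)
    (if (i : nat) == 0%N then (if (j : nat) == 0%N then p else q)
     else (if (j : nat) == 0%N then r else s)).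

(* S_n : a_0 real positive and a a^* + b b^* = 1 (as Laurent polynomials,
   i.e. at every nonzero z) *)
Definition inS (a b : 'I_n -> C) : Prop :=
  (forall i : 'I_n, (i : nat) = 0%N -> 0 < a i) /\
  (forall z : C, z != 0 ->
     la a z * lstar (la a) z + lb b z * lstar (lb b) z = 1).

Definition nlft_factor (g : C) (k : nat) (z : C) : 'M[C]_2 :=
  (sqrtC (1 + `|g| ^+ 2))^-1 *: mx2 1 (g * z ^+ k) (- g^* * z ^- k) 1.

Definition NLFT_mx (g : 'I_n -> C) (z : C) : 'M[C]_2 :=
  \prod_(k < n) nlft_factor (g k) k z.

Definition is_NLFT (g a b : 'I_n -> C) : Prop :=
  forall z : C, z != 0 ->
    NLFT_mx g z = mx2 (la a z) (lb b z) (- lstar (lb b) z) (lstar (la a) z).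

Definition dist2 (u v : 'I_n -> C) : C := \sum_(i < n) `|u i - v i| ^+ 2.
Definition dist (u v : 'I_n -> C) : C := sqrtC (dist2 u v).

Definition invNLFT_unif_cont : Prop :=
  forall eps : C, 0 < eps -> exists2 delta : C, 0 < delta &
    forall a b a' b' g g' : 'I_n -> C,
      inS a b -> inS a' b' -> is_NLFT g a b -> is_NLFT g' a' b' ->
      sqrtC (dist2 a a' + dist2 b b') < delta -> dist g g' < eps.

Definition seq_a (k : nat) : 'I_n -> C := fun i =>
  if (i : nat) == 0%N then (k%:R)^-1
  else if (i : nat) == n.-1 then sqrtC (2^-1 - (k%:R ^+ 2)^-1) else 0.
Definition seq_b (k : nat) : 'I_n -> C := fun i =>
  if (i : nat) == 0%N then sqrtC (2^-1 - (k%:R ^+ 2)^-1)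
  else if (i : nat) == n.-1 then - (k%:R)^-1 else 0.

End NLFT.

(* The first coefficient of the inverse NLFT is read off directly: conjugating the
   k-th factor by diag(z^k, 1) telescopes the NLFT matrix into
   G_0 diag(z,1) P(z) diag(z^-n, 1) with P a polynomial matrix, and the row
   combination (row 0) - gamma_0 (row 1) of G_0 diag(z,1) is divisible by z.
   Comparing constant terms in b - gamma_0 a^* gives b_0 = gamma_0 conj(a_0).
   For the explicit pairs this yields gamma_0^(k) = k sqrt(1/2 - 1/k^2)
   = sqrt(k^2/2 - 1), whose consecutive differences stay above 1/sqrt 2,
   while (a^(k), b^(k)) moves by O(1/k^2). *)
From HB Require Import structures.
From mathcomp Require Import all_boot all_order all_algebra.
From mathcomp Require Import reals complex ring lra.
Import Order.TTheory GRing.Theory Num.Theory.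
Set Implicit Arguments. Unset Strict Implicit. Unset Printing Implicit Defensive.
Local Open Scope ring_scope.

Lemma poly_eq0_on_nonzero (R : numDomainType) (p : {poly R}) :
  (forall x, x != 0 -> root p x) -> p = 0.
Proof.
move=> rootp; apply/eqP/negPn/negP => p_neq0.
set xs := [seq (i.+1)%:R : R | i <- iota 0 (size p)].
have roots_xs : all (root p) xs.
  by apply/allP => _ /mapP [i _ ->]; apply: rootp; rewrite pnatr_eq0.
have uniq_xs : uniq xs.
  by rewrite map_inj_uniq ?iota_uniq // => i j /eqP; rewrite eqr_nat => /eqP [].
by have := max_poly_roots p_neq0 roots_xs uniq_xs; rewrite size_map size_iota ltnn.
Qed.

Lemma sum_ord_ends (V : nmodType) m (f : 'I_m.+2 -> V) :
  (forall i, i != ord0 -> i != ord_max -> f i = 0) ->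
  \sum_i f i = f ord0 + f ord_max.
Proof.
move=> f_mid; rewrite (bigD1 ord0) // (bigD1 ord_max) //= big1 ?addr0 //.
by move=> i /andP [i_max i0]; apply: f_mid.
Qed.

Section TwoByTwo.
Variable C : numClosedFieldType.

Lemma mx2_00 (p q r s : C) : mx2 p q r s ord0 ord0 = p. Proof. by rewrite mxE. Qed.
Lemma mx2_01 (p q r s : C) : mx2 p q r s ord0 ord_max = q. Proof. by rewrite mxE. Qed.
Lemma mx2_10 (p q r s : C) : mx2 p q r s ord_max ord0 = r. Proof. by rewrite mxE. Qed.
Lemma mx2_11 (p q r s : C) : mx2 p q r s ord_max ord_max = s. Proof. by rewrite mxE. Qed.

Definition mx2E := (mx2_00, mx2_01, mx2_10, mx2_11).

Lemma ord2P (P : 'I_2 -> Prop) : P ord0 -> P ord_max -> forall i, P i.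
Proof.
move=> P0 P1 [[|[|i]] lti] //.
- by rewrite (_ : Ordinal lti = ord0) //; apply/val_inj.
- by rewrite (_ : Ordinal lti = ord_max) //; apply/val_inj.
Qed.

Lemma mulmx2E (A B : 'M[C]_2) i j :
  (A *m B) i j = A i ord0 * B ord0 j + A i ord_max * B ord_max j.
Proof.
rewrite mxE !big_ord_recl big_ord0 addr0.
by rewrite (_ : lift ord0 ord0 = ord_max :> 'I_2) //; apply/val_inj.
Qed.

Lemma mul_mx2 (p q r s p' q' r' s' : C) :
  mx2 p q r s *m mx2 p' q' r' s' =
  mx2 (p * p' + q * r') (p * q' + q * s') (r * p' + s * r') (r * q' + s * s').
Proof. by apply/matrixP; elim/ord2P; elim/ord2P; rewrite mulmx2E !mx2E. Qed.

Lemma scale_mx2 (c p q r s : C) :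
  c *: mx2 p q r s = mx2 (c * p) (c * q) (c * r) (c * s).
Proof. by apply/matrixP; elim/ord2P; elim/ord2P; rewrite mxE !mx2E. Qed.

Lemma mx2_id : mx2 1 0 0 1 = 1 :> 'M[C]_2.
Proof. by apply/matrixP; elim/ord2P; elim/ord2P; rewrite mx2E mxE. Qed.

Definition dmx2 (x : C) : 'M[C]_2 := mx2 x 0 0 1.

Lemma dmx2M x y : dmx2 x *m dmx2 y = dmx2 (x * y).
Proof. by rewrite mul_mx2 !(mulr0, mul0r, addr0, add0r, mulr1). Qed.

Lemma dmx2_1 : dmx2 1 = 1. Proof. exact: mx2_id. Qed.

End TwoByTwo.

Section NLFT.
Variable C : numClosedFieldType.
Implicit Types (g z : C).

Lemma lstar_la n (a : 'I_n -> C) z : lstar (la a) z = \sum_(k < n) (a k)^* * z ^+ k.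
Proof.
rewrite /lstar /la rmorph_sum; apply: eq_bigr => k _.
by rewrite rmorphM exprVn invrK rmorphXn /= conjCK.
Qed.

Lemma lstar_lb n (b : 'I_n -> C) z : lstar (lb b) z = \sum_(k < n) (b k)^* * z ^- k.
Proof.
rewrite /lstar /lb rmorph_sum; apply: eq_bigr => k _.
by rewrite rmorphM /= rmorphXn /= fmorphV /= conjCK exprVn.
Qed.

Lemma nlft_factor0 k z : nlft_factor (0 : C) k z = 1.
Proof.
rewrite /nlft_factor normr0 expr0n addr0 sqrtC1 invr1 scale1r.
by rewrite mul0r conjC0 oppr0 mul0r mx2_id.
Qed.

Lemma norm_le_dist n (u v : 'I_n -> C) i : `|u i - v i| <= dist u v.
Proof.
rewrite /dist -[leLHS]sqrCK // ler_sqrtC ?nnegrE ?exprn_ge0 //; last first.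
  by rewrite sumr_ge0 // => j _; rewrite exprn_ge0.
by rewrite /dist2 (bigD1 i) //= lerDl sumr_ge0 // => j _; rewrite exprn_ge0.
Qed.

Lemma nlft_factor_dmx2 g k z : z != 0 ->
  nlft_factor g k z = dmx2 (z ^+ k) *m nlft_factor g 0 1 *m dmx2 (z ^- k).
Proof.
move=> z0; rewrite /nlft_factor -scalemxAr -scalemxAl /dmx2 !mul_mx2.
have zk0 : z ^+ k != 0 by rewrite expf_neq0.
by congr (_ *: mx2 _ _ _ _); rewrite ?expr1n ?invr1; field.
Qed.

Lemma prod_dmx2_conj (F : nat -> 'M[C]_2) z N : z != 0 ->
  \prod_(k < N) (dmx2 (z ^+ k) *m F k *m dmx2 (z ^- k)) =
  (\prod_(k < N) (F k *m dmx2 z)) *m dmx2 (z ^- N).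
Proof.
move=> z0; elim: N => [|N IHN]; first by rewrite !big_ord0 expr0 invr1 dmx2_1 mul1mx.
have zN0 : z ^+ N != 0 by rewrite expf_neq0.
rewrite !big_ord_recr /= IHN -!mulmxE -!mulmxA !(mulmxA (dmx2 _)) dmx2M mulVf //.
rewrite dmx2_1 mul1mx dmx2M exprS invfM mulrA mulfV ?mul1r //.
Qed.

Definition Xmx : 'M[{poly C}]_2 :=
  \matrix_(i, j) (if i == j then (if i == ord0 then 'X else 1) else 0).

Lemma map_Xmx z : map_mx (horner_eval z) Xmx = dmx2 z.
Proof.
by apply/matrixP; elim/ord2P; elim/ord2P; rewrite !mxE /= horner_evalE ?hornerE.
Qed.

Lemma NLFT_mx_first_coef_divX n (g : 'I_n.+1 -> C) :
  exists p : {poly C}, forall z, z != 0 ->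
    NLFT_mx g z ord0 ord_max - g ord0 * NLFT_mx g z ord_max ord_max = z * p.[z].
Proof.
set Q := \prod_(k < n) (map_mx polyC (nlft_factor (g (lift ord0 k)) 0 1) *m Xmx).
set c := (sqrtC (1 + `|g ord0| ^+ 2))^-1.
(* row 0 minus [g ord0] times row 1 of [nlft_factor (g ord0) 0 1 *m dmx2 z]
   is [c (1 + |g ord0|^2) (z, 0)] *)
exists ((c * (1 + g ord0 * (g ord0)^*)) *: Q ord0 ord_max) => z z0.
have evalQ : map_mx (horner_eval z) Q =
    \prod_(k < n) (nlft_factor (g (lift ord0 k)) 0 1 *m dmx2 z).
  rewrite rmorph_prod; apply: eq_bigr => k _.
  rewrite rmorphM /= -mulmxE map_Xmx; congr (_ *m _).
  by apply/matrixP => i j; rewrite !mxE /= horner_evalE hornerC.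
have NLFTE : NLFT_mx g z = nlft_factor (g ord0) 0 1 *m dmx2 z *m
    map_mx (horner_eval z) Q *m dmx2 (z ^- n.+1).
  rewrite /NLFT_mx (eq_bigr (fun k : 'I_n.+1 =>
    dmx2 (z ^+ k) *m nlft_factor (g (inord k)) 0 1 *m dmx2 (z ^- k))); last first.
    by move=> k _; rewrite inord_val nlft_factor_dmx2.
  rewrite (prod_dmx2_conj (fun k => nlft_factor (g (inord k)) 0 1)) //.
  rewrite big_ord_recl evalQ -mulmxE.
  rewrite (_ : inord 0 = ord0); last by apply/val_inj; rewrite /= inordK.
  by congr (_ *m _ *m _); apply: eq_bigr => k _; rewrite inord_val.
rewrite NLFTE !mulmx2E /nlft_factor /dmx2 !mxE /= hornerZ.
by rewrite !horner_evalE expr0 invr1 -/c; ring.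
Qed.

Theorem is_NLFT_coef0 n (g a b : 'I_n.+1 -> C) :
  is_NLFT g a b -> b ord0 = g ord0 * (a ord0)^*.
Proof.
move=> NLFTg; have [p divX] := NLFT_mx_first_coef_divX g.
pose q := \poly_(k < n.+1) b (inord k) - g ord0 *: \poly_(k < n.+1) (a (inord k))^* - 'X * p.
have q0 : q = 0.
  apply: poly_eq0_on_nonzero => z z0; apply/eqP.
  rewrite !hornerE !horner_poly -divX // NLFTg // !mx2E /lb lstar_la.
  under eq_bigr do rewrite inord_val.
  by under [in X in _ - _ * X]eq_bigr do rewrite inord_val; rewrite subrr.
have := congr1 (coefp 0) q0.
rewrite /= coefB coefXM coefB coefZ !coef_poly /= subr0 (_ : inord 0 = ord0).
  by move/eqP; rewrite coef0 subr_eq0 => /eqP.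
by apply/val_inj; rewrite /= inordK.
Qed.

End NLFT.

Section RealEstimates.
Variable R : rcfType.
Implicit Types k : nat.

Definition seq_r k : R := Num.sqrt (2^-1 - (k%:R ^+ 2)^-1).

Lemma inv_nat_le_half k : (2 <= k)%N -> 0 < (k%:R : R)^-1 <= 2^-1.
Proof.
move=> k2; have k2R : (2 : R) <= k%:R by rewrite (ler_nat R 2 k).
have k0 : (0 : R) < k%:R by lra.
by rewrite invr_gt0 k0 lef_pV2 ?posrE.
Qed.

Lemma seq_r_sqr k : (2 <= k)%N -> seq_r k ^+ 2 = 2^-1 - (k%:R ^+ 2)^-1.
Proof.
move=> /inv_nat_le_half /andP [p0 p_le]; rewrite sqr_sqrtr // -exprVn.
set p := _^-1 in p0 p_le *; nra.
Qed.

Lemma seq_r_gap k : (2 <= k)%N ->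
  (Num.sqrt 2)^-1 <= seq_r k.+1 * k.+1%:R - seq_r k * k%:R.
Proof.
move=> k2; have k2R : (2 : R) <= k%:R by rewrite (ler_nat R 2 k).
have k0 : (k%:R : R) != 0 by rewrite gt_eqF //; lra.
set u := seq_r k * k%:R; set v := seq_r k.+1 * k.+1%:R; set w := (Num.sqrt 2)^-1.
have u2 : u ^+ 2 = k%:R ^+ 2 / 2 - 1 by rewrite exprMn seq_r_sqr //; field.
have v2 : v ^+ 2 = (k%:R + 1) ^+ 2 / 2 - 1.
  by rewrite exprMn seq_r_sqr ?(leqW k2) // -natr1; field; rewrite addrC natr1 pnatr_eq0.
have w2 : w ^+ 2 = 2^-1 by rewrite exprVn sqr_sqrtr.
have [u0 v0 w0] : [/\ 0 <= u, 0 <= v & 0 <= w].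
  by rewrite !mulr_ge0 ?invr_ge0 ?sqrtr_ge0.
have uw_le_k : 2 * u * w <= k%:R.
  have uw0 : 0 <= 2 * u * w by do 2?apply: mulr_ge0.
  rewrite -ler_sqr ?nnegrE ?ler0n //=.
  rewrite (_ : _ ^+ 2 = 4 * u ^+ 2 * w ^+ 2); last by ring.
  by rewrite u2 w2; lra.
suff : (u + w) ^+ 2 <= v ^+ 2 by rewrite ler_sqr ?nnegrE ?addr_ge0 //; lra.
by rewrite sqrrD u2 v2 w2; lra.
Qed.

Lemma seq_r_step k : (2 <= k)%N ->
  2 * ((k.+1%:R)^-1 - (k%:R)^-1) ^+ 2 + 2 * (seq_r k.+1 - seq_r k) ^+ 2
    <= 10 / (k%:R : R) ^+ 4.
Proof.
move=> k2; have /andP [p0 p_le] := inv_nat_le_half k2.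
have k0 : (k%:R : R) != 0 by rewrite -(invr_eq0) gt_eqF.
set p := (k%:R : R)^-1 in p0 p_le *; set q := (k.+1%:R : R)^-1.
have /andP [q0 _] := inv_nat_le_half (leqW k2).
have pq : p - q = p * q.
  by rewrite /p /q -natr1; field; rewrite natr1 pnatr_eq0 k0.
have qp : q <= p by nra.
have s2 := seq_r_sqr k2; have s2' := seq_r_sqr (leqW k2).
rewrite -!exprVn -/p -/q in s2 s2'.
have s0 : 0 <= seq_r k := sqrtr_ge0 _.
have s0' : 0 <= seq_r k.+1 := sqrtr_ge0 _.
have sk_ge : 2^-1 <= seq_r k by nra.
have sk_ge' : 2^-1 <= seq_r k.+1 by nra.
have dq : (q - p) ^+ 2 <= p ^+ 4 by nra.
(* (s' - s)(s' + s) = p^2 - q^2 with s' + s >= 1 and p - q = p q *)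
have ds : (seq_r k.+1 - seq_r k) ^+ 2 <= p ^+ 4.
  have sum_ge1 : 1 <= (seq_r k.+1 + seq_r k) ^+ 2 by nra.
  have diff_sqr : (seq_r k.+1 - seq_r k) ^+ 2 * (seq_r k.+1 + seq_r k) ^+ 2
      = (p - q) ^+ 2 * (p + q) ^+ 2.
    transitivity ((seq_r k.+1 ^+ 2 - seq_r k ^+ 2) ^+ 2); first by ring.
    by rewrite s2 s2'; ring.
  have sum_le1 : (p + q) ^+ 2 <= 1 by nra.
  have : (p - q) ^+ 2 * (p + q) ^+ 2 <= p ^+ 4.
    by rewrite -[p ^+ 4]mulr1 ler_pM ?sqr_ge0 // -sqrrN opprB.
  nra.
rewrite -exprVn -/p; nra.
Qed.

End RealEstimates.

Section ExplicitSequences.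
Variables (R : rcfType) (m : nat).
Local Notation C := R[i].
Local Notation n := m.+2.
Local Notation "x %:C" := (real_complex R x) (format "x %:C") : ring_scope.
Local Notation aC k := ((k%:R : C)^-1).
Local Notation sC k := (sqrtC (2^-1 - (k%:R ^+ 2)^-1 : C)).
Implicit Types (k : nat) (z : C).

Lemma natC_real k : (k%:R : C) = (k%:R : R)%:C.
Proof. by rewrite rmorph_nat. Qed.

Lemma aC_real k : aC k = ((k%:R : R)^-1)%:C.
Proof. by rewrite fmorphV rmorph_nat. Qed.

Lemma sC_real k : (2 <= k)%N -> sC k = (seq_r R k)%:C.
Proof.
move=> k2; rewrite -[RHS]sqrCK ?ler0c ?sqrtr_ge0 // -[_%:C ^+ 2]rmorphXn seq_r_sqr //.
by rewrite rmorphB !fmorphV rmorphXn !rmorph_nat.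
Qed.

Lemma sC_ge0 k : (2 <= k)%N -> 0 <= sC k.
Proof. by move=> k2; rewrite sC_real // ler0c sqrtr_ge0. Qed.

Lemma seq_a_ord0 k : @seq_a C n k ord0 = aC k. Proof. by []. Qed.
Lemma seq_a_ord_max k : @seq_a C n k ord_max = sC k. Proof. by rewrite /seq_a /= eqxx. Qed.
Lemma seq_b_ord0 k : @seq_b C n k ord0 = sC k. Proof. by []. Qed.
Lemma seq_b_ord_max k : @seq_b C n k ord_max = - aC k. Proof. by rewrite /seq_b /= eqxx. Qed.

Lemma seq_ab_mid k (i : 'I_n) : i != ord0 -> i != ord_max ->
  @seq_a C n k i = 0 /\ @seq_b C n k i = 0.
Proof.
move=> i0 i_max; rewrite /seq_a /seq_b.
have /negbTE -> : (i : nat) != 0%N by apply: contra i0 => /eqP i0; apply/eqP/val_inj.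
by have /negbTE -> : (i : nat) != n.-1 by apply: contra i_max => /eqP ie; apply/eqP/val_inj.
Qed.

Lemma la_seq k z : la (@seq_a C n k) z = aC k + sC k * z ^- m.+1.
Proof.
rewrite /la sum_ord_ends ?seq_a_ord0 ?seq_a_ord_max ?expr0 ?invr1 ?mulr1 //.
by move=> i i0 i_max; rewrite (seq_ab_mid k i0 i_max).1 mul0r.
Qed.

Lemma lb_seq k z : lb (@seq_b C n k) z = sC k - aC k * z ^+ m.+1.
Proof.
rewrite /lb sum_ord_ends ?seq_b_ord0 ?seq_b_ord_max ?expr0 ?mulr1 ?mulNr //.
by move=> i i0 i_max; rewrite (seq_ab_mid k i0 i_max).2 mul0r.
Qed.

Lemma lstar_la_seq k z : (2 <= k)%N ->
  lstar (la (@seq_a C n k)) z = aC k + sC k * z ^+ m.+1.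
Proof.
move=> k2; rewrite lstar_la sum_ord_ends ?seq_a_ord0 ?seq_a_ord_max ?expr0 ?mulr1.
  by rewrite !geC0_conj ?invr_ge0 ?ler0n ?sC_ge0.
by move=> i i0 i_max; rewrite (seq_ab_mid k i0 i_max).1 conjC0 mul0r.
Qed.

Lemma lstar_lb_seq k z : (2 <= k)%N ->
  lstar (lb (@seq_b C n k)) z = sC k - aC k * z ^- m.+1.
Proof.
move=> k2; rewrite lstar_lb sum_ord_ends ?seq_b_ord0 ?seq_b_ord_max ?expr0 ?invr1 ?mulr1.
  by rewrite rmorphN /= mulNr !geC0_conj ?invr_ge0 ?ler0n ?sC_ge0.
by move=> i i0 i_max; rewrite (seq_ab_mid k i0 i_max).2 conjC0 mul0r.
Qed.

Lemma sqrtC_of_real (x : R) : 0 <= x -> sqrtC x%:C = (Num.sqrt x)%:C.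
Proof.
by move=> x0; rewrite -[in LHS](sqr_sqrtr x0) rmorphXn sqrCK // ler0c sqrtr_ge0.
Qed.

Lemma normC_of_real_sqr (x : R) : `|x%:C| ^+ 2 = (x ^+ 2)%:C.
Proof. by rewrite real_normK ?rmorphXn // complex_real. Qed.

Lemma ratC_of_real k : (10 / k%:R ^+ 4 : C) = (10 / (k%:R : R) ^+ 4)%:C.
Proof. by rewrite rmorphM fmorphV rmorphXn !rmorph_nat. Qed.

Lemma inS_seq k : (2 <= k)%N -> inS (@seq_a C n k) (@seq_b C n k).
Proof.
move=> k2; split=> [i i0 | z z0].
  rewrite (_ : i = ord0); last exact/val_inj.
  by rewrite seq_a_ord0 invr_gt0 ltr0n ltnW.
rewrite la_seq lstar_la_seq // lb_seq lstar_lb_seq //.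
have w0 : z ^+ m.+1 != 0 by rewrite expf_neq0.
have k0 : (k%:R : C) != 0 by rewrite pnatr_eq0 -lt0n ltnW.
have s2 := sqrtCK (2^-1 - (k%:R ^+ 2)^-1 : C).
set w := z ^+ m.+1 in w0 *; set s := sC k in s2 *.
rewrite (_ : _ + _ = 2 * (aC k ^+ 2 + s ^+ 2)); last by field; rewrite k0 w0.
by rewrite s2; field.
Qed.

Definition seq_gamma k : 'I_n -> C := fun i =>
  if (i : nat) == 0%N then sC k * k%:R else if (i : nat) == m.+1 then -1 else 0.

Lemma nlft_seq_gamma k : (2 <= k)%N ->
  is_NLFT (seq_gamma k) (@seq_a C n k) (@seq_b C n k).
Proof.
move=> k2 z z0; have k0 : (k%:R : C) != 0 by rewrite pnatr_eq0 -lt0n ltnW.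
have gamma0 : 1 + `|sC k * k%:R| ^+ 2 = k%:R ^+ 2 / 2.
  by rewrite ger0_norm ?mulr_ge0 ?sC_ge0 ?ler0n // exprMn sqrtCK; field.
have scale_factors : (sqrtC (1 + `|sC k * k%:R| ^+ 2))^-1 *
    (sqrtC (1 + `|-1 : C| ^+ 2))^-1 = aC k.
  rewrite gamma0 normrN normr1 expr1n -invfM.
  rewrite -sqrtCM ?nnegrE ?divr_ge0 ?exprn_ge0 ?addr_ge0 ?ler01 ?ler0n //.
  by rewrite divfK ?pnatr_eq0 // sqrCK ?ler0n.
rewrite /NLFT_mx big_ord_recl big_ord_recr /= big1 => [|i _]; last first.
  rewrite (_ : seq_gamma k _ = 0) ?nlft_factor0 //.
  by rewrite /seq_gamma /= /bump leq0n add1n eqSS ltn_eqF.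
rewrite mul1r (_ : seq_gamma k (lift ord0 ord_max) = -1); last first.
  by rewrite /seq_gamma /= /bump leq0n add1n eqxx.
rewrite /nlft_factor /= /bump leq0n add1n -mulmxE -scalemxAl -scalemxAr scalerA.
rewrite scale_factors mul_mx2 scale_mx2 la_seq lb_seq lstar_la_seq // lstar_lb_seq //.
rewrite conjCN1 (_ : seq_gamma k ord0 = sC k * k%:R) //.
rewrite geC0_conj ?mulr_ge0 ?sC_ge0 ?ler0n //.
have w0 : z ^+ m.+1 != 0 by rewrite expf_neq0.
set w := z ^+ m.+1 in w0 *.
by congr mx2; rewrite expr0 ?invr1; field; rewrite ?w0 ?k0.
Qed.

Lemma is_NLFT_seq_coef0 k (g : 'I_n -> C) : (2 <= k)%N ->
  is_NLFT g (@seq_a C n k) (@seq_b C n k) -> g ord0 = sC k * k%:R.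
Proof.
move=> k2 /is_NLFT_coef0; rewrite seq_b_ord0 seq_a_ord0 geC0_conj ?invr_ge0 ?ler0n // => ->.
by rewrite mulfVK // pnatr_eq0 -lt0n ltnW.
Qed.

Lemma seq_invNLFT_gap k (g g' : 'I_n -> C) : (2 <= k)%N ->
  is_NLFT g (@seq_a C n k) (@seq_b C n k) ->
  is_NLFT g' (@seq_a C n k.+1) (@seq_b C n k.+1) ->
  (sqrtC 2)^-1 <= dist g' g.
Proof.
move=> k2 NLFTg NLFTg'; apply: le_trans (norm_le_dist g' g ord0).
rewrite (is_NLFT_seq_coef0 k2 NLFTg) (is_NLFT_seq_coef0 (leqW k2) NLFTg').
rewrite !sC_real ?(leqW k2) // !natC_real -!rmorphM -rmorphB.
have gapR := seq_r_gap R k2.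
rewrite sqrtC_of_real ?ler0n // -fmorphV.
rewrite ger0_norm ?lecR //; apply: le_trans gapR.
by rewrite invr_ge0 sqrtr_ge0.
Qed.

Lemma seq_step_dist2 k : (2 <= k)%N ->
  dist2 (@seq_a C n k.+1) (@seq_a C n k) + dist2 (@seq_b C n k.+1) (@seq_b C n k)
    <= 10 / k%:R ^+ 4.
Proof.
move=> k2; rewrite /dist2 !sum_ord_ends; try by move=> i i0 i_max;
  have [a0 b0] := seq_ab_mid k i0 i_max; have [a0' b0'] := seq_ab_mid k.+1 i0 i_max;
  rewrite ?a0 ?b0 ?a0' ?b0' subrr normr0 expr0n.
rewrite !seq_a_ord0 !seq_a_ord_max !seq_b_ord0 !seq_b_ord_max -opprD normrN.
rewrite !sC_real ?(leqW k2) // !aC_real -!rmorphB !normC_of_real_sqr -!rmorphD.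
rewrite ratC_of_real lecR; have := seq_r_step R k2.
by set da := (_ - _) ^+ 2; set ds := (_ - _) ^+ 2; set bound := 10 / _; lra.
Qed.

End ExplicitSequences.

Lemma exists_nat_ge2_small (R : archiRealFieldType) (d : R) : 0 < d ->
  exists2 k : nat, (2 <= k)%N & 10 / (k%:R : R) ^+ 4 < d.
Proof.
move=> d0; have /archi_boundP : 0 <= 10 / d by rewrite divr_ge0 ?ltW.
set N := Num.Def.archi_bound _ => N_gt; exists N.+2 => //.
have N2_ge1 : 1 <= (N.+2%:R : R) by rewrite ler1n.
have N2_gt : 10 / d < N.+2%:R by apply: (lt_le_trans N_gt); rewrite ler_nat -addn2 leq_addr.
have N2_le_pow : N.+2%:R <= (N.+2%:R : R) ^+ 4 by rewrite ler_eXnr.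
rewrite ltr_pdivrMr ?exprn_gt0 ?(lt_le_trans ltr01) //.
rewrite ltr_pdivrMr // in N2_gt; nra.
Qed.

Lemma not_invNLFT_unif_cont (R : realType) m : ~ invNLFT_unif_cont R[i] m.+2.
Proof.
have eps0 : 0 < (sqrtC 2 : R[i])^-1 by rewrite invr_gt0 sqrtC_gt0 ltr0n.
move=> /(_ _ eps0) [delta delta0 close].
have /RRe_real deltaE := gtr0_real delta0.
have [k k2 small] : exists2 k, (2 <= k)%N & 10 / (k%:R : R) ^+ 4 < complex.Re delta ^+ 2.
  by apply: exists_nat_ge2_small; rewrite exprn_gt0 // -ltcR deltaE.
have NLFTg := @nlft_seq_gamma R m k k2.
have NLFTg' := @nlft_seq_gamma R m k.+1 (leqW k2).
suff close_k : dist (@seq_gamma R m k.+1) (@seq_gamma R m k) < (sqrtC 2)^-1.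
  by have := lt_le_trans close_k (seq_invNLFT_gap k2 NLFTg NLFTg'); rewrite ltxx.
apply: close (inS_seq _ m (leqW k2)) (inS_seq _ m k2) NLFTg' NLFTg _.
have delta_ge0 := ltW delta0.
rewrite -[delta]sqrCK // ltr_sqrtC ?nnegrE ?exprn_ge0 //.
  apply: (le_lt_trans (seq_step_dist2 _ m k2)).
  by rewrite ratC_of_real -deltaE -[X in _ < X]rmorphXn ltcR.
by rewrite addr_ge0 // sumr_ge0 // => i _; rewrite exprn_ge0.
Qed.

Local Open Scope complex_scope.

Theorem mainTheorem10 (R : realType) (n : nat) : (2 <= n)%N ->
  ~ invNLFT_unif_cont (R[i]) n /\
  forall k : nat, (2 <= k)%N ->
    [/\ inS (@seq_a (R[i]) n k) (@seq_b (R[i]) n k),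
        dist2 (@seq_a (R[i]) n k.+1) (@seq_a (R[i]) n k)
          + dist2 (@seq_b (R[i]) n k.+1) (@seq_b (R[i]) n k) <= 10 / (k%:R ^+ 4),
        (forall g g' : 'I_n -> R[i],
           is_NLFT g (@seq_a (R[i]) n k) (@seq_b (R[i]) n k) ->
           is_NLFT g' (@seq_a (R[i]) n k.+1) (@seq_b (R[i]) n k.+1) ->
           (sqrtC 2)^-1 <= dist g' g)
      & exists g : 'I_n -> R[i], is_NLFT g (@seq_a (R[i]) n k) (@seq_b (R[i]) n k)].
Proof.
case: n => [|[|m]] // _; split=> [|k k2]; first exact: not_invNLFT_unif_cont.
split; first exact: inS_seq.
- exact: seq_step_dist2.
- by move=> g g'; apply: seq_invNLFT_gap.
- by exists (seq_gamma R k); apply: nlft_seq_gamma.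
Qed.
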